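(* Let $\{x_i,v_i\}_{i\in[N]}$ be the global solution of the delayed Cucker–Smale system described in the context, let $\beta>0$ and \[ G(t):=d_v(t)+\beta\int_{\max\{0,t-2\tau\}}^t e^{-(t-s)}\int_s^t\max_{i\in[N]}|\dot v_i(r)|\,\mathrm dr\,\mathrm ds,\qquad t\ge0. \] Let $K$ be the smallest integer such that $K\sigma\ge2\tau$. Then \[ G(t)\le\mathcal{Z}^K_\sigma\Delta^0_v\qquad\text{for all }t\in[0,2\tau], \] where $\mathcal{Z}^K_\sigma:=Z^K_\sigma+Z^{K-1}_\sigma\beta\big(1-(1+2\tau)e^{-2\tau}\big)$.
   Context: Let $N\ge2$, $d\ge1$ be integers, $[N]=\{1,\dots,N\}$, $0\le\sigma\le\tau$. Let $\psi:[0,\infty)\to[0,\infty)$ be continuous, nonincreasing, positive everywhere, with $\sup\psi\le1$. Given $x_i^0\in C^1([-\tau,0],\mathbb{R}^d)$, $v_i^0\in C([-\tau,0],\mathbb{R}^d)$ with $\frac{\mathrm d}{\mathrm dt}x_i^0=v_i^0$, $\{x_i,v_i\}$ is the global solution of $\dot x_i(t)=v_i(t)$, $\dot v_i(t)=\sum_{j\ne i}a_{ij}(t)(v_j(t-\tau)-v_i(t-\sigma))$ for $t>0$, with $a_{ij}(t)=\frac1{N-1}\psi(|x_i(t-\sigma)-x_j(t-\tau)|)$, and $x_i=x_i^0$, $v_i=v_i^0$ on $[-\tau,0]$ ($v_i$ continuously differentiable on $[0,\infty)$). $d_v(t):=\max_{i,j}|v_i(t)-v_j(t)|$; $\Delta^0_v:=\max_{i,j}\max_{s,t\in[-\tau,0]}|v_i^0(s)-v_j^0(t)|$.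 For $k\ge0$, \[ Z^k_\sigma:=\frac{1}{2\sqrt{\sigma(1+\sigma)}}\Big[\big((1+\sigma)+\sqrt{\sigma(1+\sigma)}\big)^{k+1}-\big((1+\sigma)-\sqrt{\sigma(1+\sigma)}\big)^{k+1}\Big], \] a polynomial in $\sigma$; equivalently $Z^0_\sigma=1$, $Z^k_\sigma=1+(1+\sigma)Z^{k-1}_\sigma+\sigma\sum_{m=0}^{k-1}Z^m_\sigma$ for $k\ge1$. *)

From Stdlib Require Import Reals Lra List.
From Coquelicot Require Import Coquelicot.
Open Scope R_scope.

(* Vectors of R^d are represented as functions nat -> R (components 0..d-1).
   Particle families are indexed by nat (particles 0..N-1). *)

Definition sumR (n : nat) (f : nat -> R) : R :=
  fold_right Rplus 0 (map f (seq 0 n)).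

(* finite max over k = 0..n-1 (of nonnegative quantities; 0 for n = 0) *)
Definition maxR (n : nat) (f : nat -> R) : R :=
  fold_right Rmax 0 (map f (seq 0 n)).

Definition vnorm (d : nat) (u : nat -> R) : R :=
  sqrt (sumR d (fun k => (u k) ^ 2)).

Definition vsub (u w : nat -> R) : nat -> R := fun k => u k - w k.

Definition d_v (N d : nat) (v : nat -> R -> nat -> R) (t : R) : R :=
  maxR N (fun i => maxR N (fun j => vnorm d (vsub (v i t) (v j t)))).

(* Delta^0_v = max_{i,j} max_{s,t in [-tau,0]} |v^0_i(s) - v^0_j(t)|
   (a maximum of a continuous function on a compact set, written as its sup) *)
Definition Delta0 (N d : nat) (tau : R) (v0 : nat -> R -> nat -> R) : R :=
  real (Lub_Rbar (fun z => exists i j s t,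
    (i < N)%nat /\ (j < N)%nat /\ -tau <= s <= 0 /\ -tau <= t <= 0 /\
    z = vnorm d (vsub (v0 i s) (v0 j t)))).

Definition Zsig (sigma : R) (k : nat) : R :=
  / (2 * sqrt (sigma * (1 + sigma))) *
  (((1 + sigma) + sqrt (sigma * (1 + sigma))) ^ (k + 1)
   - ((1 + sigma) - sqrt (sigma * (1 + sigma))) ^ (k + 1)).

Definition vdot (v : nat -> R -> nat -> R) (i : nat) (r : R) : nat -> R :=
  fun k => Derive (fun s => v i s k) r.

Definition Gfun (N d : nat) (tau beta : R) (v : nat -> R -> nat -> R) (t : R) : R :=
  d_v N d v t +
  beta * RInt (fun s => exp (-(t - s)) *
                 RInt (fun r => maxR N (fun i => vnorm d (vdot v i r))) s t)
              (Rmax 0 (t - 2 * tau)) t.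

Definition a_w (N d : nat) (sigma tau : R) (psi : R -> R)
  (x : nat -> R -> nat -> R) (i j : nat) (t : R) : R :=
  / INR (N - 1) * psi (vnorm d (vsub (x i (t - sigma)) (x j (t - tau)))).

Definition rhs (N d : nat) (sigma tau : R) (psi : R -> R)
  (x v : nat -> R -> nat -> R) (i : nat) (t : R) (k : nat) : R :=
  sumR N (fun j => if Nat.eqb j i then 0 else
    a_w N d sigma tau psi x i j t * (v j (t - tau) k - v i (t - sigma) k)).

From Stdlib Require Import Reals Lra Lia List.
From Coquelicot Require Import Coquelicot.
Open Scope R_scope.

(* Write P_k := (1 + 2 sigma)^k Delta0.  All velocity differences |v_i(s) - v_j(u)| with
   s, u in [-tau, k sigma] are bounded by P_k.  Indeed, for t in [k sigma, (k+1) sigma] both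
   delayed times t - sigma and t - tau lie in [-tau, k sigma], and the weights a_ij (j <> i)
   sum to at most 1, so every acceleration is bounded by P_k; by the mean value theorem each
   velocity then moves by at most sigma P_k on [k sigma, (k+1) sigma], whence P_(k+1).
   For t <= 2 tau <= K sigma this bounds d_v(t) by P_K and the inner integrand of G by
   P_(K-1), and int_0^t e^-(t-s) (t-s) ds = 1 - (1+t) e^-t is increasing in t.  Finally
   (1 + 2 sigma)^k <= Z^k_sigma, from Z^(k+2) = 2 (1+sigma) Z^(k+1) - (1+sigma) Z^k. *)

Lemma sumR_S n f : sumR (S n) f = sumR n f + f n.
Proof.
  unfold sumR. rewrite seq_S, map_app, fold_right_app. simpl.
  induction (map f (seq 0 n)) as [|a l IH]; simpl; [ring | rewrite IH; ring].
Qed.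

Lemma maxR_S n f : maxR (S n) f = Rmax (maxR n f) (f n).
Proof.
  unfold maxR. rewrite seq_S, map_app, fold_right_app. simpl.
  induction (map f (seq 0 n)) as [|a l IH]; simpl.
  - apply Rmax_comm.
  - rewrite IH. apply Rmax_assoc.
Qed.

Lemma sumR_ext n f g : (forall k, (k < n)%nat -> f k = g k) -> sumR n f = sumR n g.
Proof.
  induction n as [|n IH]; intros Hfg; [reflexivity|].
  rewrite !sumR_S, IH by (intros; apply Hfg; lia). now rewrite Hfg by lia.
Qed.

Lemma sumR_le n f g : (forall k, (k < n)%nat -> f k <= g k) -> sumR n f <= sumR n g.
Proof.
  induction n as [|n IH]; intros Hfg; [unfold sumR; simpl; lra|].
  rewrite !sumR_S. apply Rplus_le_compat; [apply IH; intros|]; apply Hfg; lia.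
Qed.

Lemma sumR_plus n f g : sumR n (fun k => f k + g k) = sumR n f + sumR n g.
Proof. induction n as [|n IH]; [unfold sumR; simpl; ring|]. rewrite !sumR_S, IH. ring. Qed.

Lemma sumR_scal n c f : sumR n (fun k => c * f k) = c * sumR n f.
Proof. induction n as [|n IH]; [unfold sumR; simpl; ring|]. rewrite !sumR_S, IH. ring. Qed.

Lemma sumR_nonneg n f : (forall k, (k < n)%nat -> 0 <= f k) -> 0 <= sumR n f.
Proof.
  induction n as [|n IH]; intros Hf; [unfold sumR; simpl; lra|].
  rewrite sumR_S. apply Rplus_le_le_0_compat; [apply IH; intros|]; apply Hf; lia.
Qed.

Lemma le_sumR n f k : (forall j, (j < n)%nat -> 0 <= f j) -> (k < n)%nat -> f k <= sumR n f.
Proof.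
  induction n as [|n IH]; intros Hf Hk; [lia|]. rewrite sumR_S.
  destruct (Nat.eq_dec k n) as [->|Hkn].
  - pose proof (sumR_nonneg n f (fun j Hj => Hf j ltac:(lia))). lra.
  - pose proof (IH (fun j Hj => Hf j ltac:(lia)) ltac:(lia)). pose proof (Hf n ltac:(lia)). lra.
Qed.

Lemma sumR_Nat_eqb n i c : (i < n)%nat ->
  sumR n (fun j => if Nat.eqb j i then 0 else c) = INR (n - 1) * c.
Proof.
  intros Hi.
  (* the correction term lets the induction run through the cases n <= i *)
  enough (H : sumR n (fun j => if Nat.eqb j i then 0 else c) + (if Nat.ltb i n then c else 0)
              = INR n * c).
  { destruct (Nat.ltb_spec i n); [|lia]. rewrite minus_INR by lia. simpl. lra. }
  clear Hi. induction n as [|n IH]; [unfold sumR; simpl; ring|].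
  rewrite sumR_S, S_INR.
  destruct (Nat.eqb_spec n i), (Nat.ltb_spec i n), (Nat.ltb_spec i (S n)); try lia; lra.
Qed.

Lemma maxR_lub n f B : 0 <= B -> (forall k, (k < n)%nat -> f k <= B) -> maxR n f <= B.
Proof.
  induction n as [|n IH]; intros HB Hf; [unfold maxR; simpl; lra|].
  rewrite maxR_S. apply Rmax_lub; [apply IH; auto; intros|]; apply Hf; lia.
Qed.

Lemma maxR_ext n f g : (forall k, (k < n)%nat -> f k = g k) -> maxR n f = maxR n g.
Proof.
  induction n as [|n IH]; intros Hfg; [reflexivity|].
  rewrite !maxR_S, IH by (intros; apply Hfg; lia). now rewrite Hfg by lia.
Qed.

Lemma vnorm_nonneg d u : 0 <= vnorm d u.
Proof. apply sqrt_pos. Qed.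

Lemma vnorm_ext d u w : (forall k, (k < d)%nat -> u k = w k) -> vnorm d u = vnorm d w.
Proof. intros Huw. unfold vnorm. f_equal. apply sumR_ext. intros k Hk. now rewrite Huw. Qed.

Lemma sumR_sq_nonneg d u : 0 <= sumR d (fun k => u k ^ 2).
Proof. apply sumR_nonneg. intros; apply pow2_ge_0. Qed.

Lemma vnorm_pow2 d u : vnorm d u ^ 2 = sumR d (fun k => u k ^ 2).
Proof. apply pow2_sqrt, sumR_sq_nonneg. Qed.

Lemma Cauchy_Schwarz_sumR d u w :
  sumR d (fun k => u k * w k) ^ 2 <= sumR d (fun k => u k ^ 2) * sumR d (fun k => w k ^ 2).
Proof.
  induction d as [|d IH]; [unfold sumR; simpl; lra|].
  rewrite !sumR_S.
  pose proof (sumR_sq_nonneg d u) as HU. pose proof (sumR_sq_nonneg d w) as HW.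
  set (A := sumR d (fun k => u k * w k)) in *.
  set (U := sumR d (fun k => u k ^ 2)) in *. set (W := sumR d (fun k => w k ^ 2)) in *.
  assert (Hcross : Rsqr (2 * A * (u d * w d)) <= Rsqr (U * w d ^ 2 + u d ^ 2 * W)).
  { assert (A ^ 2 * (u d * w d) ^ 2 <= U * W * (u d * w d) ^ 2)
      by (apply Rmult_le_compat_r; [apply pow2_ge_0 | exact IH]).
    pose proof (pow2_ge_0 (U * w d ^ 2 - u d ^ 2 * W)). unfold Rsqr. nra. }
  assert (Hpos : 0 <= U * w d ^ 2 + u d ^ 2 * W)
    by (pose proof (pow2_ge_0 (u d)); pose proof (pow2_ge_0 (w d)); nra).
  apply Rsqr_le_abs_0 in Hcross; unfold Rsqr in Hcross.
  rewrite (Rabs_right (U * _ + _)) in Hcross by lra.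
  pose proof (Rle_abs (2 * A * (u d * w d))). nra.
Qed.

Lemma sumR_mul_le_vnorm d u w : sumR d (fun k => u k * w k) <= vnorm d u * vnorm d w.
Proof.
  unfold vnorm. rewrite <- sqrt_mult by apply sumR_sq_nonneg.
  eapply Rle_trans; [apply Rle_abs|]. rewrite <- sqrt_Rsqr_abs.
  apply sqrt_le_1_alt. unfold Rsqr. pose proof (Cauchy_Schwarz_sumR d u w). nra.
Qed.

Lemma vnorm_triangle d u w z : (forall k, (k < d)%nat -> z k = u k + w k) ->
  vnorm d z <= vnorm d u + vnorm d w.
Proof.
  intros Hz.
  pose proof (vnorm_nonneg d u). pose proof (vnorm_nonneg d w). pose proof (vnorm_nonneg d z).
  assert (Hsq : vnorm d z ^ 2 = vnorm d u ^ 2 + 2 * sumR d (fun k => u k * w k) + vnorm d w ^ 2).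
  { rewrite !vnorm_pow2, <- sumR_scal, <- !sumR_plus.
    apply sumR_ext. intros k Hk. rewrite Hz by exact Hk. ring. }
  pose proof (sumR_mul_le_vnorm d u w). nra.
Qed.

Lemma vnorm_scal d c u z : (forall k, (k < d)%nat -> z k = c * u k) ->
  vnorm d z = Rabs c * vnorm d u.
Proof.
  intros Hz. unfold vnorm. rewrite <- sqrt_Rsqr_abs, <- sqrt_mult_alt by apply Rle_0_sqr.
  f_equal. rewrite <- sumR_scal. apply sumR_ext. intros k Hk. rewrite Hz by exact Hk.
  unfold Rsqr. ring.
Qed.

Lemma vnorm_zero d z : (forall k, (k < d)%nat -> z k = 0) -> vnorm d z = 0.
Proof.
  intros Hz. rewrite (vnorm_scal d 0 z) by (intros k Hk; rewrite Hz by exact Hk; ring).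
  rewrite Rabs_R0. ring.
Qed.

Lemma vnorm_sumR d n (g : nat -> nat -> R) z :
  (forall k, (k < d)%nat -> z k = sumR n (fun j => g j k)) ->
  vnorm d z <= sumR n (fun j => vnorm d (g j)).
Proof.
  revert z. induction n as [|n IH]; intros z Hz.
  - rewrite vnorm_zero by exact Hz. unfold sumR; simpl; lra.
  - rewrite sumR_S.
    eapply Rle_trans.
    { apply (vnorm_triangle d (fun k => sumR n (fun j => g j k)) (g n)).
      intros k Hk. rewrite Hz, sumR_S by exact Hk. reflexivity. }
    apply Rplus_le_compat_r, IH. reflexivity.
Qed.

Lemma vnorm_vsub_le d a b : vnorm d (vsub a b) <= vnorm d a + vnorm d b.
Proof.
  eapply Rle_trans; [apply (vnorm_triangle d a (fun k => -1 * b k)); intros; unfold vsub; ring|].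
  rewrite (vnorm_scal d (-1) b (fun k => -1 * b k)) by reflexivity.
  replace (Rabs (-1)) with 1 by (rewrite Rabs_Zabs; reflexivity). lra.
Qed.

Lemma vnorm_vsub_triangle d a b c :
  vnorm d (vsub a c) <= vnorm d (vsub a b) + vnorm d (vsub b c).
Proof. apply vnorm_triangle. intros; unfold vsub; ring. Qed.

Lemma vnorm_vsub_sym d a b : vnorm d (vsub a b) = vnorm d (vsub b a).
Proof.
  rewrite (vnorm_scal d (-1) (vsub b a)) by (intros; unfold vsub; ring).
  replace (Rabs (-1)) with 1 by (rewrite Rabs_Zabs; reflexivity). ring.
Qed.

Lemma vnorm_vsub_diag d a : vnorm d (vsub a a) = 0.
Proof. apply vnorm_zero. intros; unfold vsub; ring. Qed.

Section Zsig_growth.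
Variable sigma : R.
Hypothesis Hsigma : 0 < sigma.

Let s := sqrt (sigma * (1 + sigma)).
Let a := (1 + sigma) + s.
Let b := (1 + sigma) - s.

Let s_pos : 0 < s.
Proof. apply sqrt_lt_R0. nra. Qed.

Let s_sq : s * s = sigma * (1 + sigma).
Proof. apply sqrt_sqrt. nra. Qed.

Lemma Zsig_0 : Zsig sigma 0 = 1.
Proof. unfold Zsig. fold s. simpl. pose proof s_pos. field. lra. Qed.

Lemma Zsig_1 : Zsig sigma 1 = 2 + 2 * sigma.
Proof. unfold Zsig. fold s. simpl. pose proof s_pos. field. lra. Qed.

Lemma Zsig_SS k :
  Zsig sigma (S (S k)) = 2 * (1 + sigma) * Zsig sigma (S k) - (1 + sigma) * Zsig sigma k.
Proof.
  unfold Zsig. fold s. fold a. fold b. pose proof s_pos.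
  assert (Hab : a * b = 1 + sigma).
  { unfold a, b. replace (_ * _) with ((1 + sigma) ^ 2 - s * s) by ring. rewrite s_sq. ring. }
  assert (Hapb : a + b = 2 * (1 + sigma)) by (unfold a, b; ring).
  rewrite <- Hapb, <- Hab.
  replace (S (S k) + 1)%nat with (S (S (k + 1))) by lia.
  replace (S k + 1)%nat with (S (k + 1)) by lia.
  simpl. field. lra.
Qed.

Lemma Zsig_S_ge k : 0 <= Zsig sigma k /\ (1 + 2 * sigma) * Zsig sigma k <= Zsig sigma (S k).
Proof.
  induction k as [|k [Hk0 Hk1]].
  - rewrite Zsig_0, Zsig_1. lra.
  - split; [nra|]. rewrite Zsig_SS. nra.
Qed.

Lemma pow_le_Zsig k : (1 + 2 * sigma) ^ k <= Zsig sigma k.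
Proof.
  induction k as [|k IH]; [rewrite Zsig_0; simpl; lra|].
  destruct (Zsig_S_ge k). simpl. nra.
Qed.

End Zsig_growth.

Lemma continuous_Rmax_comp (f g : R -> R) x :
  continuous f x -> continuous g x -> continuous (fun y => Rmax (f y) (g y)) x.
Proof.
  intros Hf Hg.
  apply (continuous_ext (fun y => (f y + g y + Rabs (f y - g y)) * / 2)).
  { intros y. unfold Rmax.
    destruct (Rle_dec (f y) (g y)); [rewrite Rabs_left1 | rewrite Rabs_right]; lra. }
  apply (continuous_mult _ (fun _ => / 2)); [|apply continuous_const].
  apply (continuous_plus (fun y => f y + g y) (fun y => Rabs (f y - g y))).
  { apply (continuous_plus f g); assumption. }
  apply continuous_Rabs_comp, (continuous_minus f g); assumption.
Qed.

Lemma continuous_sumR n (f : nat -> R -> R) x : (forall j, (j < n)%nat -> continuous (f j) x) ->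
  continuous (fun y => sumR n (fun j => f j y)) x.
Proof.
  induction n as [|n IH]; intros Hf; [apply continuous_const|].
  apply (continuous_ext (fun y => sumR n (fun j => f j y) + f n y)).
  { intros y. now rewrite sumR_S. }
  apply (continuous_plus (fun y => sumR n (fun j => f j y)) (f n));
    [apply IH; intros|]; apply Hf; lia.
Qed.

Lemma continuous_maxR n (f : nat -> R -> R) x : (forall j, (j < n)%nat -> continuous (f j) x) ->
  continuous (fun y => maxR n (fun j => f j y)) x.
Proof.
  induction n as [|n IH]; intros Hf; [apply continuous_const|].
  apply (continuous_ext (fun y => Rmax (maxR n (fun j => f j y)) (f n y))).
  { intros y. now rewrite maxR_S. }
  apply continuous_Rmax_comp; [apply IH; intros|]; apply Hf; lia.
Qed.

Lemma continuous_vnorm d (u : R -> nat -> R) x :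
  (forall k, (k < d)%nat -> continuous (fun y => u y k) x) ->
  continuous (fun y => vnorm d (u y)) x.
Proof.
  intros Hu. apply continuous_sqrt_comp, (continuous_sumR d (fun k y => u y k ^ 2)).
  intros k Hk. apply (continuous_ext (fun y => u y k * (u y k * 1))); [intros; reflexivity|].
  apply (continuous_mult (fun y => u y k) (fun y => u y k * 1)).
  { apply Hu, Hk. }
  apply (continuous_mult (fun y => u y k) (fun _ => 1)); [apply Hu, Hk | apply continuous_const].
Qed.

Lemma continuous_comp_within (h f : R -> R) (D : R -> Prop) x :
  (forall y, D (h y)) -> continuous h x ->
  filterlim f (within D (locally (h x))) (locally (f (h x))) ->
  continuous (fun y => f (h y)) x.
Proof.
  intros HD Hh Hf. eapply filterlim_comp; [|exact Hf].
  intros P HP. apply (filter_imp _ _ (fun y Hy => Hy (HD y)) (Hh _ HP)).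
Qed.

Lemma filterlim_within_glue (f f0 : R -> R) a p :
  (forall t, a <= t <= 0 -> f t = f0 t) ->
  (forall t, a <= t <= 0 ->
     filterlim f0 (within (fun s => a <= s <= 0) (locally t)) (locally (f0 t))) ->
  (forall t, 0 <= t -> continuous f t) -> a <= p ->
  filterlim f (within (fun q => a <= q) (locally p)) (locally (f p)).
Proof.
  intros Heq Hf0 Hf Hp P HP. unfold filtermap, within.
  destruct (Rle_dec 0 p) as [Hp0|Hp0].
  - eapply filter_imp; [|exact (Hf p Hp0 P HP)]. simpl. auto.
  - rewrite Heq in HP by lra.
    assert (Hneg : locally p (fun q => q < 0)) by (apply open_lt; lra).
    specialize (Hf0 p ltac:(lra) P HP). unfold filtermap, within in Hf0.
    eapply filter_imp; [|exact (filter_and _ _ Hf0 Hneg)].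
    simpl. intros q [Hq Hq0] Haq. rewrite Heq by lra. apply Hq. lra.
Qed.

Lemma continuous_Rmax_extension (f f0 : R -> R) a c p :
  (forall t, a <= t <= 0 -> f t = f0 t) ->
  (forall t, a <= t <= 0 ->
     filterlim f0 (within (fun s => a <= s <= 0) (locally t)) (locally (f0 t))) ->
  (forall t, 0 <= t -> continuous f t) ->
  continuous (fun r => f (Rmax a (r - c))) p.
Proof.
  intros Heq Hf0 Hf.
  apply (continuous_comp_within (fun r => Rmax a (r - c)) f (fun q => a <= q)).
  - intros; apply Rmax_l.
  - apply (continuous_Rmax_comp (fun _ => a) (fun r => r - c)); [apply continuous_const|].
    apply (continuous_minus (fun r => r) (fun _ => c));
      [apply continuous_id | apply continuous_const].
  - apply (filterlim_within_glue f f0); [exact Heq | exact Hf0 | exact Hf | apply Rmax_l].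
Qed.

(* Without an upper bound B the set could have Lub_Rbar = +oo, whose [real] is 0. *)
Lemma le_real_Lub_Rbar (E : R -> Prop) B z :
  (forall y, E y -> y <= B) -> E z -> z <= real (Lub_Rbar E).
Proof.
  intros HB Hz. destruct (Lub_Rbar_correct E) as [Hub Hlub].
  specialize (Hub z Hz).
  assert (Rbar_le (Lub_Rbar E) B) by (apply Hlub; intros y Hy; apply HB, Hy).
  destruct (Lub_Rbar E); simpl in *; tauto.
Qed.

Lemma le_Delta0 N d tau v0 B :
  (forall i s, (i < N)%nat -> -tau <= s <= 0 -> vnorm d (v0 i s) <= B) ->
  forall i j s u, (i < N)%nat -> (j < N)%nat -> -tau <= s <= 0 -> -tau <= u <= 0 ->
  vnorm d (vsub (v0 i s) (v0 j u)) <= Delta0 N d tau v0.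
Proof.
  intros HB i j s u Hi Hj Hs Hu. apply (le_real_Lub_Rbar _ (B + B)).
  - intros y (i' & j' & s' & u' & Hi' & Hj' & Hs' & Hu' & ->).
    eapply Rle_trans; [apply vnorm_vsub_le|].
    apply Rplus_le_compat; apply HB; assumption.
  - exists i, j, s, u. repeat split; auto; lra.
Qed.

Lemma is_derive_sumR n (f : nat -> R -> R) (df : nat -> R) r :
  (forall k, (k < n)%nat -> is_derive (f k) r (df k)) ->
  is_derive (fun y => sumR n (fun k => f k y)) r (sumR n df).
Proof.
  induction n as [|n IH]; intros Hf; [apply (is_derive_const 0 r)|].
  apply (is_derive_ext (fun y => sumR n (fun k => f k y) + f n y)).
  { intros y. now rewrite sumR_S. }
  rewrite sumR_S. apply (is_derive_plus (fun y => sumR n (fun k => f k y)) (f n)).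
  - apply IH. intros; apply Hf; lia.
  - apply Hf; lia.
Qed.

Lemma vnorm_vsub_le_mvt d (f f' : R -> nat -> R) a b M : a <= b ->
  (forall k, (k < d)%nat -> forall r, a < r < b -> is_derive (fun s => f s k) r (f' r k)) ->
  (forall k, (k < d)%nat -> forall r, a <= r <= b -> continuous (fun s => f s k) r) ->
  (forall r, a <= r <= b -> vnorm d (f' r) <= M) ->
  vnorm d (vsub (f b) (f a)) <= (b - a) * M.
Proof.
  intros Hab Hder Hcont HM.
  set (w := vsub (f b) (f a)).
  (* scalar mean value theorem for the projection of f onto w *)
  destruct (MVT_gen (fun y => sumR d (fun k => w k * f y k)) a b
              (fun y => sumR d (fun k => w k * f' y k))) as [c [Hc Hmvt]].
  - rewrite Rmin_left, Rmax_right by lra. intros r Hr.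
    apply (is_derive_sumR d (fun k y => w k * f y k)). intros k Hk.
    apply is_derive_scal, Hder; assumption.
  - rewrite Rmin_left, Rmax_right by lra. intros r Hr.
    apply continuity_pt_filterlim, (continuous_sumR d (fun k y => w k * f y k)). intros k Hk.
    apply (continuous_mult (fun _ => w k) (fun y => f y k));
      [apply continuous_const | apply Hcont; assumption].
  - rewrite Rmin_left, Rmax_right in Hc by lra.
    assert (Hw : vnorm d w ^ 2 = sumR d (fun k => w k * f' c k) * (b - a)).
    { rewrite <- Hmvt, vnorm_pow2.
      replace (_ - _) with (sumR d (fun k => w k * f b k) + -1 * sumR d (fun k => w k * f a k))
        by ring.
      rewrite <- sumR_scal, <- sumR_plus. apply sumR_ext. intros k Hk. unfold w, vsub. ring. }
    assert (Hwc : sumR d (fun k => w k * f' c k) <= vnorm d w * M).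
    { eapply Rle_trans; [apply sumR_mul_le_vnorm|].
      apply Rmult_le_compat_l; [apply vnorm_nonneg | apply HM, Hc]. }
    assert (HM0 : 0 <= M) by (eapply Rle_trans; [apply vnorm_nonneg | apply (HM a); lra]).
    assert (Hsq : vnorm d w * vnorm d w <= vnorm d w * ((b - a) * M)).
    { replace (vnorm d w * vnorm d w) with (vnorm d w ^ 2) by ring. rewrite Hw.
      replace (vnorm d w * ((b - a) * M)) with (vnorm d w * M * (b - a)) by ring.
      apply Rmult_le_compat_r; lra. }
    assert (0 <= (b - a) * M) by (apply Rmult_le_pos; lra).
    pose proof (vnorm_nonneg d w). set (X := (b - a) * M) in *. nra.
Qed.

Lemma is_RInt_exp_mul_linear t M :
  is_RInt (fun s => exp (-(t - s)) * (M * (t - s))) 0 t (M * (1 - (1 + t) * exp (- t))).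
Proof.
  set (Phi := fun s => M * (1 + t - s) * exp (-(t - s))).
  replace (M * (1 - (1 + t) * exp (- t))) with (minus (Phi t) (Phi 0)).
  - apply (@is_RInt_derive R_CompleteNormedModule).
    + intros s _. unfold Phi. auto_derive; [exact I | unfold Rminus; ring].
    + intros s _. apply (@ex_derive_continuous R_AbsRing R_NormedModule). auto_derive. exact I.
  - unfold minus, plus, opp, Phi; simpl.
    replace (t - t) with 0 by ring. replace (t - 0) with t by ring.
    rewrite Ropp_0, exp_0. ring.
Qed.

Lemma RInt_exp_RInt_le (F G : R -> R) t M : 0 <= t ->
  (forall r, continuous G r) -> (forall r, 0 < r < t -> F r = G r) ->
  (forall r, 0 < r < t -> G r <= M) ->
  RInt (fun s => exp (-(t - s)) * RInt F s t) 0 t <= M * (1 - (1 + t) * exp (- t)).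
Proof.
  intros Ht HG HFG HGM.
  assert (HexG : forall a b, ex_RInt G a b)
    by (intros; apply (@ex_RInt_continuous R_CompleteNormedModule); auto).
  rewrite (RInt_ext _ (fun s => exp (-(t - s)) * RInt G s t)).
  2: { rewrite Rmin_left, Rmax_right by lra. intros s Hs. f_equal.
       apply RInt_ext. rewrite Rmin_left, Rmax_right by lra. intros r Hr. apply HFG. lra. }
  rewrite <- (is_RInt_unique _ _ _ _ (is_RInt_exp_mul_linear t M)).
  apply RInt_le; [assumption | | |].
  - apply (@ex_RInt_continuous R_CompleteNormedModule). intros s _.
    apply (continuous_mult (fun s => exp (-(t - s))) (fun s => RInt G s t)).
    + apply (@ex_derive_continuous R_AbsRing R_NormedModule). auto_derive. exact I.
    + apply (continuous_RInt_2 G s t). apply filter_forall. intros z.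
      apply (@RInt_correct R_CompleteNormedModule), HexG.
  - eexists. apply is_RInt_exp_mul_linear.
  - intros s Hs. apply Rmult_le_compat_l; [apply Rlt_le, exp_pos|].
    replace (M * (t - s)) with (RInt (fun _ => M) s t)
      by (rewrite RInt_const; unfold scal; simpl; unfold mult; simpl; ring).
    apply RInt_le; [lra | apply HexG | apply ex_RInt_const |].
    intros r Hr. apply HGM. lra.
Qed.

Lemma one_sub_succ_mul_exp_le a b : 0 <= a <= b ->
  1 - (1 + a) * exp (- a) <= 1 - (1 + b) * exp (- b).
Proof.
  intros Hab.
  assert (Hsplit : exp (- a) = exp (- b) * exp (b - a)) by (rewrite <- exp_plus; f_equal; ring).
  pose proof (exp_ineq1_le (b - a)). pose proof (exp_pos (- b)).
  assert (1 + b <= (1 + a) * exp (b - a)) by nra.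
  rewrite Hsplit. nra.
Qed.

Lemma vnorm_rhs_le N d sigma tau psi x v i r P : (2 <= N)%nat -> (i < N)%nat ->
  (forall q, 0 <= q -> 0 <= psi q <= 1) ->
  (forall j, (j < N)%nat -> vnorm d (vsub (v j (r - tau)) (v i (r - sigma))) <= P) ->
  vnorm d (fun k => rhs N d sigma tau psi x v i r k) <= P.
Proof.
  intros HN Hi Hpsi HP.
  assert (HN1 : 0 < / INR (N - 1)) by (apply Rinv_0_lt_compat, lt_0_INR; lia).
  eapply Rle_trans; [apply vnorm_sumR; reflexivity|].
  eapply Rle_trans.
  { apply (sumR_le N _ (fun j => if Nat.eqb j i then 0 else / INR (N - 1) * P)).
    intros j Hj. cbv beta. destruct (Nat.eqb j i).
    - rewrite vnorm_zero by reflexivity. lra.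
    - rewrite (vnorm_scal d (a_w N d sigma tau psi x i j r)
                 (vsub (v j (r - tau)) (v i (r - sigma)))) by reflexivity.
      unfold a_w.
      destruct (Hpsi (vnorm d (vsub (x i (r - sigma)) (x j (r - tau))))) as [Hpsi0 Hpsi1];
        [apply vnorm_nonneg|].
      rewrite Rabs_right by (apply Rle_ge, Rmult_le_pos; lra).
      apply Rmult_le_compat; [apply Rmult_le_pos; lra | apply vnorm_nonneg | | apply HP, Hj].
      rewrite <- (Rmult_1_r (/ INR (N - 1))) at 2. apply Rmult_le_compat_l; lra. }
  rewrite sumR_Nat_eqb by exact Hi. right. field. apply not_0_INR. lia.
Qed.

Section Solution.
Variables (N d : nat) (sigma tau : R) (psi : R -> R) (x0 v0 x v : nat -> R -> nat -> R).
Hypothesis HN : (2 <= N)%nat.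
Hypothesis Hsigma : 0 < sigma.
Hypothesis Hsigma_tau : sigma <= tau.
Hypothesis Hpsi_cont : forall r, 0 <= r ->
  filterlim psi (within (fun s => 0 <= s) (locally r)) (locally (psi r)).
Hypothesis Hpsi : forall r, 0 <= r -> 0 <= psi r <= 1.
Hypothesis Hx0 : forall i k, (i < N)%nat -> (k < d)%nat -> forall t, -tau <= t <= 0 ->
  filterlim (fun s => x0 i s k) (within (fun s => -tau <= s <= 0) (locally t))
            (locally (x0 i t k)).
Hypothesis Hv0 : forall i k, (i < N)%nat -> (k < d)%nat -> forall t, -tau <= t <= 0 ->
  filterlim (fun s => v0 i s k) (within (fun s => -tau <= s <= 0) (locally t))
            (locally (v0 i t k)).
Hypothesis Hinitial : forall i t, (i < N)%nat -> -tau <= t <= 0 ->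
  x i t = x0 i t /\ v i t = v0 i t.
Hypothesis Hcont : forall i k, (i < N)%nat -> (k < d)%nat -> forall t, 0 <= t ->
  continuous (fun s => x i s k) t /\ continuous (fun s => v i s k) t.
Hypothesis Hsys : forall i k, (i < N)%nat -> (k < d)%nat -> forall t, 0 < t ->
  is_derive (fun s => x i s k) t (v i t k) /\
  is_derive (fun s => v i s k) t (rhs N d sigma tau psi x v i t k).

Let Delta := Delta0 N d tau v0.

(* Extending x and v to the left of -tau by their values at -tau makes the delayed velocity
   field defined and continuous on all of R; it is unchanged for t >= 0. *)
Let xe i q := x i (Rmax (- tau) q).
Let ve i q := v i (Rmax (- tau) q).

Let xe_continuous i k c p : (i < N)%nat -> (k < d)%nat ->
  continuous (fun r => xe i (r - c) k) p.
Proof.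
  intros Hi Hk. apply (continuous_Rmax_extension (fun s => x i s k) (fun s => x0 i s k)).
  - intros t Ht. now rewrite (proj1 (Hinitial i t Hi Ht)).
  - apply Hx0; assumption.
  - intros t Ht. apply Hcont; assumption.
Qed.

Let ve_continuous i k c p : (i < N)%nat -> (k < d)%nat ->
  continuous (fun r => ve i (r - c) k) p.
Proof.
  intros Hi Hk. apply (continuous_Rmax_extension (fun s => v i s k) (fun s => v0 i s k)).
  - intros t Ht. now rewrite (proj2 (Hinitial i t Hi Ht)).
  - apply Hv0; assumption.
  - intros t Ht. apply Hcont; assumption.
Qed.

Lemma initial_velocity_bounded :
  exists B, forall i s, (i < N)%nat -> -tau <= s <= 0 -> vnorm d (v i s) <= B.
Proof.
  set (g := fun p => sumR N (fun i => vnorm d (ve i p))).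
  destruct (continuity_ab_maj g (- tau) 0) as [p [Hp _]]; [lra| |].
  { intros c _. apply continuity_pt_filterlim, (continuous_sumR N (fun i p => vnorm d (ve i p))).
    intros i Hi. apply (continuous_vnorm d (fun p => ve i p)). intros k Hk.
    apply (continuous_ext (fun r => ve i (r - 0) k)); [intros; now rewrite Rminus_0_r|].
    apply ve_continuous; assumption. }
  exists (g p). intros i s Hi Hs. eapply Rle_trans; [|apply Hp, Hs].
  replace (v i s) with (ve i s) by (unfold ve; now rewrite Rmax_right by lra).
  apply (le_sumR N (fun i => vnorm d (ve i s))); [intros; apply vnorm_nonneg | exact Hi].
Qed.

Lemma initial_velocity_diameter i j s u : (i < N)%nat -> (j < N)%nat ->
  -tau <= s <= 0 -> -tau <= u <= 0 -> vnorm d (vsub (v i s) (v j u)) <= Delta.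
Proof.
  intros Hi Hj Hs Hu. destruct initial_velocity_bounded as [B HB].
  rewrite (proj2 (Hinitial i s Hi Hs)), (proj2 (Hinitial j u Hj Hu)).
  apply (le_Delta0 N d tau v0 B); try assumption.
  intros l q Hl Hq. rewrite <- (proj2 (Hinitial l q Hl Hq)). apply HB; assumption.
Qed.

Lemma Delta_nonneg : 0 <= Delta.
Proof.
  rewrite <- (vnorm_vsub_diag d (v 0%nat 0)).
  apply initial_velocity_diameter; try lia; lra.
Qed.

Section Step.
Variables T P : R.
Hypothesis HT : 0 <= T.
Hypothesis Hdiam : forall i j s u, (i < N)%nat -> (j < N)%nat ->
  -tau <= s <= T -> -tau <= u <= T -> vnorm d (vsub (v i s) (v j u)) <= P.

Lemma vnorm_rhs_le_diameter i r : (i < N)%nat -> 0 <= r <= T + sigma ->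
  vnorm d (fun k => rhs N d sigma tau psi x v i r k) <= P.
Proof.
  intros Hi Hr. apply vnorm_rhs_le; [exact HN | exact Hi | exact Hpsi |].
  intros j Hj. apply Hdiam; [exact Hj | exact Hi | lra | lra].
Qed.

Lemma velocity_increment_le i y : (i < N)%nat -> -tau <= y <= T + sigma ->
  vnorm d (vsub (v i y) (v i (Rmin y T))) <= sigma * P.
Proof.
  intros Hi Hy.
  assert (HP : 0 <= P)
    by (eapply Rle_trans; [apply vnorm_nonneg | apply (Hdiam i i T T); auto; lra]).
  destruct (Rle_dec y T) as [HyT|HyT].
  - rewrite Rmin_left, vnorm_vsub_diag by exact HyT. apply Rmult_le_pos; lra.
  - rewrite Rmin_right by lra.
    apply Rle_trans with ((y - T) * P); [|apply Rmult_le_compat_r; lra].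
    apply (vnorm_vsub_le_mvt d (v i) (fun r k => rhs N d sigma tau psi x v i r k)); [lra | | |].
    + intros k Hk r Hr. apply Hsys; [assumption | assumption | lra].
    + intros k Hk r Hr. apply Hcont; [assumption | assumption | lra].
    + intros r Hr. apply vnorm_rhs_le_diameter; [assumption | lra].
Qed.

End Step.

Lemma velocity_diameter_le k i j s u : (i < N)%nat -> (j < N)%nat ->
  -tau <= s <= INR k * sigma -> -tau <= u <= INR k * sigma ->
  vnorm d (vsub (v i s) (v j u)) <= (1 + 2 * sigma) ^ k * Delta.
Proof.
  revert i j s u. induction k as [|k IH]; intros i j s u Hi Hj Hs Hu.
  - rewrite Rmult_1_l. apply initial_velocity_diameter; simpl in *; auto; lra.
  - rewrite S_INR, Rmult_plus_distr_r, Rmult_1_l in Hs, Hu.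
    set (T := INR k * sigma) in *. set (P := (1 + 2 * sigma) ^ k * Delta) in *.
    assert (HT : 0 <= T) by (apply Rmult_le_pos; [apply pos_INR | lra]).
    assert (HminT : forall y, -tau <= y -> -tau <= Rmin y T <= T)
      by (intros y Hy; split; [apply Rmin_glb; lra | apply Rmin_r]).
    pose proof (velocity_increment_le T P HT IH i s Hi ltac:(lra)) as Hs_inc.
    pose proof (velocity_increment_le T P HT IH j u Hj ltac:(lra)) as Hu_inc.
    rewrite vnorm_vsub_sym in Hu_inc.
    pose proof (IH i j (Rmin s T) (Rmin u T) Hi Hj (HminT s ltac:(lra)) (HminT u ltac:(lra))).
    pose proof (vnorm_vsub_triangle d (v i s) (v i (Rmin s T)) (v j u)).
    pose proof (vnorm_vsub_triangle d (v i (Rmin s T)) (v j (Rmin u T)) (v j u)).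
    replace ((1 + 2 * sigma) ^ S k * Delta) with (sigma * P + P + sigma * P)
      by (unfold P; simpl; ring).
    lra.
Qed.

Let accel r := maxR N (fun i => vnorm d (fun k => rhs N d sigma tau psi xe ve i r k)).

Let accel_continuous r : continuous accel r.
Proof.
  apply (continuous_maxR N (fun i r => vnorm d (fun k => rhs N d sigma tau psi xe ve i r k))).
  intros i Hi. apply (continuous_vnorm d (fun r k => rhs N d sigma tau psi xe ve i r k)).
  intros k Hk. unfold rhs.
  apply (continuous_sumR N (fun j r => if Nat.eqb j i then 0 else
    a_w N d sigma tau psi xe i j r * (ve j (r - tau) k - ve i (r - sigma) k))).
  intros j Hj. destruct (Nat.eqb j i); [apply continuous_const|].
  apply (continuous_mult (fun r => a_w N d sigma tau psi xe i j r)
                         (fun r => ve j (r - tau) k - ve i (r - sigma) k)).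
  - unfold a_w.
    apply (continuous_mult (fun _ => / INR (N - 1))
             (fun r => psi (vnorm d (vsub (xe i (r - sigma)) (xe j (r - tau))))));
      [apply continuous_const|].
    apply (continuous_comp_within (fun r => vnorm d (vsub (xe i (r - sigma)) (xe j (r - tau))))
             psi (fun q => 0 <= q)).
    + intros; apply vnorm_nonneg.
    + apply (continuous_vnorm d (fun r => vsub (xe i (r - sigma)) (xe j (r - tau)))).
      intros l Hl. unfold vsub.
      apply (continuous_minus (fun r => xe i (r - sigma) l) (fun r => xe j (r - tau) l));
        apply xe_continuous; assumption.
    + apply Hpsi_cont, vnorm_nonneg.
  - apply (continuous_minus (fun r => ve j (r - tau) k) (fun r => ve i (r - sigma) k));
      apply ve_continuous; assumption.
Qed.

Let rhs_extension i r k : 0 <= r ->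
  rhs N d sigma tau psi xe ve i r k = rhs N d sigma tau psi x v i r k.
Proof.
  intros Hr. unfold rhs, a_w, xe, ve.
  now rewrite (Rmax_right (- tau) (r - sigma)), (Rmax_right (- tau) (r - tau)) by lra.
Qed.

Let accel_eq r : 0 < r -> maxR N (fun i => vnorm d (vdot v i r)) = accel r.
Proof.
  intros Hr. apply maxR_ext. intros i Hi. apply vnorm_ext. intros k Hk.
  unfold vdot. rewrite rhs_extension by lra.
  apply is_derive_unique, Hsys; assumption.
Qed.

Let accel_le k r : 0 <= r <= INR (S k) * sigma -> accel r <= (1 + 2 * sigma) ^ k * Delta.
Proof.
  intros Hr. rewrite S_INR in Hr.
  apply maxR_lub; [apply Rmult_le_pos; [apply pow_le; lra | apply Delta_nonneg]|].
  intros i Hi. rewrite (vnorm_ext d _ (fun k => rhs N d sigma tau psi x v i r k))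
    by (intros; apply rhs_extension; lra).
  apply (vnorm_rhs_le_diameter (INR k * sigma)); [| exact Hi | lra].
  intros; apply velocity_diameter_le; assumption.
Qed.

Lemma d_v_le k t : 0 <= t <= INR k * sigma -> d_v N d v t <= (1 + 2 * sigma) ^ k * Delta.
Proof.
  intros Ht.
  assert (HP : 0 <= (1 + 2 * sigma) ^ k * Delta)
    by (apply Rmult_le_pos; [apply pow_le; lra | apply Delta_nonneg]).
  apply maxR_lub; [exact HP|]. intros i Hi. apply maxR_lub; [exact HP|]. intros j Hj.
  apply velocity_diameter_le; auto; lra.
Qed.

Lemma RInt_speed_le k t : 0 <= t <= INR (S k) * sigma ->
  RInt (fun s => exp (- (t - s)) * RInt (fun r => maxR N (fun i => vnorm d (vdot v i r))) s t) 0 t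
  <= (1 + 2 * sigma) ^ k * Delta * (1 - (1 + t) * exp (- t)).
Proof.
  intros Ht. apply (RInt_exp_RInt_le _ accel); [lra | exact accel_continuous | |].
  - intros r Hr. apply accel_eq. lra.
  - intros r Hr. apply accel_le. lra.
Qed.

End Solution.

Theorem lemma4p2
  (N d : nat) (sigma tau beta : R) (psi : R -> R)
  (x0 v0 x v : nat -> R -> nat -> R) (K : nat) :
  (2 <= N)%nat -> (1 <= d)%nat ->
  0 < sigma -> sigma <= tau ->
  (* psi: continuous, nonincreasing, positive, sup psi <= 1 on [0,oo) *)
  (forall r, 0 <= r ->
     filterlim psi (within (fun s => 0 <= s) (locally r)) (locally (psi r))) ->
  (forall r1 r2, 0 <= r1 -> r1 <= r2 -> psi r2 <= psi r1) ->
  (forall r, 0 <= r -> 0 < psi r /\ psi r <= 1) ->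
  (* initial data: x0_i in C^1([-tau,0]), v0_i in C([-tau,0]), x0_i' = v0_i *)
  (forall i k, (i < N)%nat -> (k < d)%nat ->
     forall t, -tau <= t <= 0 ->
       filterlim (fun s => v0 i s k) (within (fun s => -tau <= s <= 0) (locally t))
                 (locally (v0 i t k)) /\
       filterlim (fun s => x0 i s k) (within (fun s => -tau <= s <= 0) (locally t))
                 (locally (x0 i t k))) ->
  (forall i k, (i < N)%nat -> (k < d)%nat ->
     forall t, -tau < t < 0 -> is_derive (fun s => x0 i s k) t (v0 i t k)) ->
  (* the solution agrees with the initial data on [-tau,0] *)
  (forall i t, (i < N)%nat -> -tau <= t <= 0 -> x i t = x0 i t /\ v i t = v0 i t) ->
  (* continuity of the solution at t >= 0 *)
  (forall i k, (i < N)%nat -> (k < d)%nat -> forall t, 0 <= t ->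
     continuous (fun s => x i s k) t /\ continuous (fun s => v i s k) t) ->
  (* the delayed Cucker-Smale system for t > 0 *)
  (forall i k, (i < N)%nat -> (k < d)%nat -> forall t, 0 < t ->
     is_derive (fun s => x i s k) t (v i t k) /\
     is_derive (fun s => v i s k) t (rhs N d sigma tau psi x v i t k)) ->
  0 < beta ->
  (* K = smallest integer with K sigma >= 2 tau *)
  2 * tau <= INR K * sigma -> INR (K - 1) * sigma < 2 * tau ->
  forall t, 0 <= t <= 2 * tau ->
    Gfun N d tau beta v t <=
    (Zsig sigma K + Zsig sigma (K - 1) * beta * (1 - (1 + 2 * tau) * exp (- (2 * tau))))
    * Delta0 N d tau v0.
Proof.
  intros HN _ Hsigma Hsigma_tau Hpsi_cont _ Hpsi_pos Hinit _ Hinitial Hcont Hsys Hbeta HK _ t Ht.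
  destruct K as [|K]; [simpl in HK; lra|].
  replace (S K - 1)%nat with K by lia.
  assert (Hpsi : forall r, 0 <= r -> 0 <= psi r <= 1)
    by (intros r Hr; specialize (Hpsi_pos r Hr); lra).
  assert (Hx0 := fun i k Hi Hk s Hs => proj2 (Hinit i k Hi Hk s Hs)).
  assert (Hv0 := fun i k Hi Hk s Hs => proj1 (Hinit i k Hi Hk s Hs)).
  set (Delta := Delta0 N d tau v0).
  set (h := 1 - (1 + 2 * tau) * exp (- (2 * tau))).
  set (I := RInt (fun s => exp (- (t - s)) *
              RInt (fun r => maxR N (fun i => vnorm d (vdot v i r))) s t) 0 t).
  assert (HD : 0 <= Delta)
    by exact (Delta_nonneg N d sigma tau x0 v0 x v HN Hsigma Hsigma_tau Hv0 Hinitial Hcont).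
  assert (Hdv : d_v N d v t <= (1 + 2 * sigma) ^ S K * Delta)
    by (apply (d_v_le N d sigma tau psi x0 v0 x v); auto; lra).
  assert (HI : I <= (1 + 2 * sigma) ^ K * Delta * (1 - (1 + t) * exp (- t)))
    by (apply (RInt_speed_le N d sigma tau psi x0 v0 x v); auto; lra).
  assert (Hexp : 0 <= 1 - (1 + t) * exp (- t) <= h).
  { pose proof (one_sub_succ_mul_exp_le 0 t ltac:(lra)).
    pose proof (one_sub_succ_mul_exp_le t (2 * tau) ltac:(lra)).
    unfold h. rewrite Ropp_0, exp_0 in *. lra. }
  pose proof (pow_le_Zsig sigma Hsigma (S K)). pose proof (pow_le_Zsig sigma Hsigma K).
  unfold Gfun. rewrite Rmax_left by lra. fold I.
  apply Rle_trans with (Zsig sigma (S K) * Delta + beta * (Zsig sigma K * Delta * h));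
    [|right; ring].
  apply Rplus_le_compat.
  - eapply Rle_trans; [exact Hdv | apply Rmult_le_compat_r; assumption].
  - apply Rmult_le_compat_l; [lra|]. eapply Rle_trans; [exact HI|].
    apply Rmult_le_compat; [| lra | apply Rmult_le_compat_r |]; try lra.
    apply Rmult_le_pos; [apply pow_le |]; lra.
Qed.
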